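(* For every graph $G$, $\mathrm{ltp}(G)-1\le \mathrm{tw}(G)\le 2\,\mathrm{ltp}(G)-1$.
   Context: For a tree $T$ and integer $k$, $T[K_k]$ denotes the lexicographic product: the graph obtained from $T$ by replacing each vertex by a copy of $K_k$ and each edge by a copy of $K_{k,k}$ between the corresponding copies. The lexicographic tree product number $\mathrm{ltp}(G)$ is the minimum integer $k$ such that $G$ is a minor of $T[K_k]$ for some tree $T$. The treewidth $\mathrm{tw}(G)$ is the minimum over tree decompositions of $G$ (a tree with bags $B_x\subseteq V(G)$ such that each vertex's bags form a non-empty subtree and each edge lies in some bag) of the maximum bag size minus $1$. *)

From mathcomp Require Import all_boot all_order all_algebra.
Set Implicit Arguments. Unset Strict Implicit. Unset Printing Implicit Defensive.

Definition simple_graph (V : finType) (e : rel V) : Prop :=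
  symmetric e /\ irreflexive e.

Definition restrict_rel (V : finType) (e : rel V) (S : {set V}) : rel V :=
  [rel x y | [&& e x y, x \in S & y \in S]].

(* S induces a connected subgraph of (V,e) (the empty set is allowed here;
   non-emptiness is required separately where needed). *)
Definition connected_in (V : finType) (e : rel V) (S : {set V}) : Prop :=
  forall x y, x \in S -> y \in S -> connect (restrict_rel e S) x y.

Definition acyclic (X : finType) (f : rel X) : Prop :=
  forall s : seq X, uniq s -> 3 <= size s -> ~~ cycle f s.

Definition is_tree (X : finType) (f : rel X) : Prop :=
  [/\ simple_graph f, 0 < #|X|, connected_in f setT & acyclic f].

Definition tree_decomposition (V : finType) (e : rel V)
    (X : finType) (f : rel X) (B : X -> {set V}) : Prop :=
  [/\ is_tree f,
      (forall v : V, [set x | v \in B x] != set0 /\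
                     connected_in f [set x | v \in B x])
    & (forall u v : V, e u v -> exists x : X, (u \in B x) && (v \in B x))].

Definition has_td_bagsize (V : finType) (e : rel V) (k : nat) : Prop :=
  exists (X : finType) (f : rel X) (B : X -> {set V}),
    tree_decomposition e f B /\ forall x : X, #|B x| <= k.

Definition treewidth_is (V : finType) (e : rel V) (t : int) : Prop :=
  exists k : nat, t = (k%:Z - 1)%R /\ has_td_bagsize e k /\
    forall k', has_td_bagsize e k' -> k <= k'.

Definition is_minor (V : finType) (e : rel V) (W : finType) (h : rel W) : Prop :=
  exists beta : V -> {set W},
    [/\ (forall v, beta v != set0),
        (forall v, connected_in h (beta v)),
        (forall u v, u != v -> [disjoint beta u & beta v])
      & (forall u v, e u v ->
           exists x y, [&& x \in beta u, y \in beta v & h x y])].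

Definition lex_prod (X : finType) (f : rel X) (k : nat) : rel (prod X 'I_k) :=
  [rel p q | ((p.1 == q.1) && (p.2 != q.2)) || f p.1 q.1].

Definition has_ltp (V : finType) (e : rel V) (k : nat) : Prop :=
  exists (X : finType) (f : rel X), is_tree f /\ is_minor e (@lex_prod X f k).

Definition ltp_is (V : finType) (e : rel V) (l : nat) : Prop :=
  has_ltp e l /\ forall k, has_ltp e k -> l <= k.

From mathcomp Require Import all_boot all_order all_algebra.
From mathcomp Require Import zify.
From Stdlib Require Import Classical.
Import Order.TTheory GRing.Theory Num.Theory.
Set Implicit Arguments. Unset Strict Implicit. Unset Printing Implicit Defensive.

(* A tree decomposition (T, B) with bags of size at most k makes G a minor of
   T[K_k]: number the vertices of each bag B x by 0, ..., k-1 and send v to the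
   copies (x, index of v in B x) for x with v in B x; these form a connected set
   because the bags containing v form a subtree.
   Conversely, given a model of G in T[K_k], root T and put into the bag of x
   every vertex whose branch set meets the copies of K_k over x or over its
   parent.  A bag then meets at most 2k disjoint branch sets, and every tree
   edge is a parent edge, so adjacent branch sets share a bag. *)

Lemma connect_homo (T U : finType) (e : rel T) (e' : rel U) (h : T -> U) :
  {homo h : a b / e a b >-> connect e' a b} ->
  {homo h : a b / connect e a b >-> connect e' a b}.
Proof.
move=> eh a _ /connectP[p e_p ->]; elim: p a e_p => [|c p IHp] a /=.
  by move=> _; exact: connect0.
by case/andP=> /eh e'ac /IHp; apply: connect_trans.
Qed.

Lemma restrict_rel_sym (X : finType) (f : rel X) (S : {set X}) :
  symmetric f -> symmetric (restrict_rel f S).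
Proof. by move=> f_sym x y; rewrite /restrict_rel /= f_sym [(x \in S) && _]andbC. Qed.

Definition del_edge (X : finType) (f : rel X) (a b : X) : rel X :=
  [rel x y | f x y && ~~ (((x == a) && (y == b)) || ((x == b) && (y == a)))].

Section RootedTree.
Variables (X : finType) (f : rel X).
Hypotheses (f_sym : symmetric f) (f_irr : irreflexive f) (f_acyc : acyclic f).

Lemma del_edge_sym a b : symmetric (del_edge f a b).
Proof.
move=> x y; rewrite /del_edge /= f_sym; congr andb.
by case: (x == a); case: (x == b); case: (y == a); case: (y == b).
Qed.

Lemma del_edgeC a b : del_edge f b a =2 del_edge f a b.
Proof. by move=> x y; rewrite /del_edge /= [(_ && _) || _]orbC. Qed.

Lemma connect_del_edgeC a b x y :
  connect (del_edge f a b) x y = connect (del_edge f a b) y x.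
Proof. exact/sym_connect_sym/del_edge_sym. Qed.

Lemma edge_neq a b : f a b -> a != b.
Proof. by apply: contraTneq => ->; rewrite f_irr. Qed.

Lemma del_edge_disconnects a b : f a b -> ~~ connect (del_edge f a b) a b.
Proof.
move=> fab; apply/negP => /connectP[p pth].
case: (shortenP pth) => -[|c [|d q]] /= {}pth uq _ lst.
- by move: (edge_neq fab); rewrite lst eqxx.
- by move: pth; rewrite -lst /del_edge /= !eqxx andbF.
- have sub : subrel (del_edge f a b) f by move=> x y /andP[].
  have /negP := @f_acyc [:: a, c, d & q] uq isT; apply; case/and3P: pth => ac cd dq.
  by rewrite /= rcons_path (sub _ _ ac) (sub _ _ cd) (sub_path sub dq) -lst f_sym fab.
Qed.

Lemma path_del_edge_ends a b s p : path f s p -> last s p = a ->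
  connect (del_edge f a b) s a \/ connect (del_edge f a b) s b.
Proof.
elim: p s => [|c p IHp] s /=; first by move=> _ ->; left.
case/andP=> fsc pc lc.
have [-> | sa] := eqVneq s a; first by left.
have [-> | sb] := eqVneq s b; first by right.
have del_sc : del_edge f a b s c by rewrite /del_edge /= fsc (negbTE sa) (negbTE sb).
by case: (IHp c pc lc) => H; [left | right]; apply: connect_trans (connect1 del_sc) H.
Qed.

Lemma del_edge_path_reroute x y y' s p : y != y' ->
  path (del_edge f x y') s p ->
  connect (del_edge f x y') s x \/ connect (del_edge f x y) s (last s p).
Proof.
move=> yy'; elim: p s => [|c p IHp] s /=; first by right.
case/andP=> del_sc /IHp[cx | c_last]; first by left; apply: connect_trans (connect1 del_sc) cx.
have [-> | sx] := eqVneq s x; first by left.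
have [cx | ncx] := eqVneq c x; first by left; move: del_sc; rewrite cx => /connect1.
right; apply: connect_trans c_last; apply: connect1.
by case/andP: del_sc => fsc _; rewrite /del_edge /= fsc (negbTE sx) (negbTE ncx) !andbF.
Qed.

Variable r : X.

(* The parent of [x] is the neighbour [y] that still reaches the root [r]
   once the edge [xy] is removed; [r] itself has no parent. *)
Definition parent (x : X) : option X :=
  [pick y | f x y && connect (del_edge f x y) y r].

Lemma parent_edge x y : parent x = Some y -> f x y.
Proof. by rewrite /parent; case: pickP => // z /andP[fxz _] [<-]. Qed.

Lemma toward_root_uniq x y y' : f x y -> f x y' ->
  connect (del_edge f x y) y r -> connect (del_edge f x y') y' r -> y = y'.
Proof.
move=> fxy fxy' y_r y'_r; apply/eqP/negPn/negP => yy'.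
case/connectP: y'_r => p pth r_last.
case: (del_edge_path_reroute yy' pth) => [y'x | ].
  by move: (del_edge_disconnects fxy'); rewrite connect_del_edgeC y'x.
rewrite -r_last => y'_r; apply: (negP (del_edge_disconnects fxy)).
have del_xy' : del_edge f x y x y'.
  by rewrite /del_edge /= fxy' eqxx eq_sym (negbTE yy') (negbTE (edge_neq fxy)).
apply: connect_trans (connect1 del_xy') _; apply: connect_trans y'_r _.
by rewrite connect_del_edgeC.
Qed.

Lemma parent_toward_root x y : f x y -> connect (del_edge f x y) y r ->
  parent x = Some y.
Proof.
move=> fxy y_r; rewrite /parent; case: pickP => [z /andP[fxz z_r] | none].
  by rewrite (toward_root_uniq fxz fxy z_r y_r).
by move: (none y); rewrite fxy y_r.
Qed.

Hypothesis r_conn : forall x, connect f r x.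

Lemma edge_parent a b : f a b -> parent a = Some b \/ parent b = Some a.
Proof.
move=> fab; case/connectP: (r_conn a) => p pth a_last.
case: (path_del_edge_ends b pth (esym a_last)) => [r_a | r_b].
  right; apply: parent_toward_root; first by rewrite f_sym.
  by rewrite (eq_connect (del_edgeC a b)) connect_del_edgeC.
by left; apply: parent_toward_root; rewrite // connect_del_edgeC.
Qed.

End RootedTree.

Lemma tree_parent_function (X : finType) (f : rel X) : is_tree f ->
  exists parent : X -> option X,
    (forall x y, parent x = Some y -> f x y) /\
    (forall a b, f a b -> parent a = Some b \/ parent b = Some a).
Proof.
case=> [[f_sym f_irr] /card_gt0P[r _] f_conn f_acyc].
have r_conn x : connect f r x.
  apply: connect_sub (f_conn r x (in_setT r) (in_setT x)) => a b /andP[fab _].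
  exact: connect1.
exists (parent f r); split; first exact: parent_edge.
exact: edge_parent.
Qed.

Lemma card_le_disjoint_meets (T U : finType) (g : T -> {set U})
    (A : {set T}) (C : {set U}) :
  (forall u v, u != v -> [disjoint g u & g v]) ->
  {in A, forall v, g v :&: C != set0} -> #|A| <= #|C|.
Proof.
move=> g_disj meets.
pose pt v := [pick p in g v :&: C].
have pt_in v : v \in A -> exists2 p, pt v = Some p & p \in g v :&: C.
  move=> /meets/set0Pn[p0 p0in]; rewrite /pt.
  by case: pickP => [p | /(_ p0)]; [exists p | rewrite p0in].
have pt_inj : {in A &, injective pt}.
  move=> u v /pt_in[p -> /setIP[pu _]] /pt_in[q -> /setIP[qv _]] [pq].
  apply/eqP/negPn/negP => /g_disj/disjointFr/(_ pu).
  by rewrite pq qv.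
rewrite -(card_in_imset pt_inj) -(card_imset C (@Some_inj _)).
apply/subset_leq_card/subsetP => _ /imsetP[v /pt_in[p -> /setIP[_ pC]] ->].
exact: imset_f.
Qed.

Lemma connect_lex_fst (X : finType) (f : rel X) (k : nat)
    (P : {set X * 'I_k}) (S : {set X}) (p q : X * 'I_k) :
  {in P, forall p, p.1 \in S} ->
  connect (restrict_rel (@lex_prod _ f k) P) p q -> connect (restrict_rel f S) p.1 q.1.
Proof.
move=> PS; apply: connect_homo => a b /and3P[/orP[/andP[/eqP-> _] | fab] aP bP].
  exact: connect0.
by apply: connect1; rewrite /restrict_rel /= fab !PS.
Qed.

Section LexMinorDecomposition.
Variables (V X : finType) (e : rel V) (f : rel X) (k : nat).
Variables (beta : V -> {set X * 'I_k}) (parent : X -> option X).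
Hypotheses (f_sym : symmetric f)
  (beta_neq0 : forall v, beta v != set0)
  (beta_conn : forall v, connected_in (@lex_prod _ f k) (beta v))
  (beta_disj : forall u v, u != v -> [disjoint beta u & beta v])
  (beta_edge : forall u v, e u v ->
     exists x y, [&& x \in beta u, y \in beta v & @lex_prod _ f k x y])
  (parent_edge : forall x y, parent x = Some y -> f x y)
  (edge_parent : forall a b, f a b -> parent a = Some b \/ parent b = Some a).

Definition parent_pair (x : X) : {set X} :=
  if parent x is Some y then [set x; y] else [set x].

Definition lex_bag (x : X) : {set V} :=
  [set v | [exists p in beta v, p.1 \in parent_pair x]].

Lemma parent_pair_self x : x \in parent_pair x.
Proof. by rewrite /parent_pair; case: (parent x) => [y|]; rewrite !inE eqxx. Qed.

Lemma parent_pair_parent x y : parent x = Some y -> y \in parent_pair x.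
Proof. by rewrite /parent_pair => ->; rewrite !inE eqxx orbT. Qed.

Lemma parent_pairP x y : y \in parent_pair x -> y = x \/ parent x = Some y.
Proof.
rewrite /parent_pair; case: (parent x) => [z|] /[!inE]; last by move/eqP; left.
by case/orP=> /eqP->; [left | right].
Qed.

Lemma parent_pair_card x : #|parent_pair x| <= 2.
Proof.
by rewrite /parent_pair; case: (parent x) => [y|]; rewrite ?cards2 ?cards1 ?ltnS ?leq_b1.
Qed.

Lemma mem_lex_bag v p x : p \in beta v -> p.1 \in parent_pair x -> v \in lex_bag x.
Proof. by move=> pv px; rewrite inE; apply/existsP; exists p; rewrite pv. Qed.

Lemma lex_bag_card x : #|lex_bag x| <= 2 * k.
Proof.
apply: (@leq_trans #|setX (parent_pair x) [set: 'I_k]|).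
  apply: card_le_disjoint_meets beta_disj _ => v /[!inE] /existsP[p /andP[pv px]].
  by apply/set0Pn; exists p; rewrite !inE pv px.
by rewrite cardsX cardsT card_ord leq_mul2r parent_pair_card orbT.
Qed.

Lemma lex_bag_subtree v :
  [set x | v \in lex_bag x] != set0 /\ connected_in f [set x | v \in lex_bag x].
Proof.
set S := [set x | v \in lex_bag x].
have beta_S p : p \in beta v -> p.1 \in S.
  by move=> pv; rewrite inE (mem_lex_bag pv (parent_pair_self _)).
have near_beta x : x \in S -> exists2 p, p \in beta v & connect (restrict_rel f S) x p.1.
  move=> xS; have /[!inE] /existsP[p /andP[pv /parent_pairP px]] := xS.
  exists p => //; case: px => [-> // | /parent_edge fxp].
  by apply: connect1; rewrite /restrict_rel /= fxp xS beta_S.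
split; first by case/set0Pn: (beta_neq0 v) => p /beta_S xS; apply/set0Pn; exists p.1.
move=> x y /near_beta[p pv xp] /near_beta[q qv yq].
apply: connect_trans xp _; apply: connect_trans (connect_lex_fst beta_S (beta_conn pv qv)) _.
by rewrite (sym_connect_sym (restrict_rel_sym S f_sym)).
Qed.

Lemma lex_bag_edge u v : e u v -> exists x, (u \in lex_bag x) && (v \in lex_bag x).
Proof.
case/beta_edge => p [q /and3P[pu qv /orP[/andP[/eqP pq _] | fpq]]].
  exists p.1; rewrite (mem_lex_bag pu (parent_pair_self _)).
  by rewrite (mem_lex_bag qv) // pq parent_pair_self.
case: (edge_parent fpq) => /parent_pair_parent par_pq; [exists p.1 | exists q.1].
  by rewrite (mem_lex_bag pu (parent_pair_self _)) (mem_lex_bag qv par_pq).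
by rewrite (mem_lex_bag pu par_pq) (mem_lex_bag qv (parent_pair_self _)).
Qed.

End LexMinorDecomposition.

Lemma has_ltp_td_bagsize (V : finType) (e : rel V) k :
  has_ltp e k -> has_td_bagsize e (2 * k).
Proof.
case=> X [f [f_tree [beta [beta_neq0 beta_conn beta_disj beta_edge]]]].
have [parent [parent_edge edge_parent]] := tree_parent_function f_tree.
have [[f_sym _] _ _ _] := f_tree.
exists X, f, (lex_bag beta parent); split; last exact: lex_bag_card.
split=> //.
  exact: lex_bag_subtree f_sym beta_neq0 beta_conn parent_edge.
exact: lex_bag_edge beta_edge edge_parent.
Qed.

Section DecompositionLexMinor.
Variables (V X : finType) (e : rel V) (f : rel X) (B : X -> {set V}) (k : nat).
Hypotheses (e_irr : irreflexive e)
  (B_subtree : forall v, [set x | v \in B x] != set0 /\ connected_in f [set x | v \in B x])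
  (B_edge : forall u v, e u v -> exists x, (u \in B x) && (v \in B x))
  (B_card : forall x, #|B x| <= k).

Definition slot (x : X) (v : V) : nat := index v (enum (B x)).

Definition branch (v : V) : {set X * 'I_k} :=
  [set p | (v \in B p.1) && (val p.2 == slot p.1 v)].

Lemma branch_fst v p : p \in branch v -> v \in B p.1.
Proof. by rewrite inE => /andP[]. Qed.

Lemma slot_lt x v : v \in B x -> slot x v < k.
Proof. by move=> vx; apply: leq_trans (B_card x); rewrite cardE index_mem mem_enum. Qed.

Lemma slot_inj x u v : u \in B x -> v \in B x -> slot x u = slot x v -> u = v.
Proof. by move=> ux vx; apply: index_inj; rewrite ?mem_enum. Qed.

Lemma mem_branch (i0 : 'I_k) x v : v \in B x -> (x, insubd i0 (slot x v)) \in branch v.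
Proof. by move=> vx; rewrite inE /= vx val_insubd (slot_lt vx) eqxx. Qed.

Lemma branch_fst_inj v p q : p \in branch v -> q \in branch v -> p.1 = q.1 -> p = q.
Proof.
case: p q => [x i] [y j] /[!inE] /= /andP[_ /eqP ix] /andP[_ /eqP jy] xy.
by rewrite -xy in jy *; congr pair; apply: val_inj; rewrite /= ix jy.
Qed.

Lemma branch_neq0 v : branch v != set0.
Proof.
case: (B_subtree v) => /set0Pn[x /[!inE] vx] _.
by apply/set0Pn; exists (x, Ordinal (slot_lt vx)); rewrite inE vx /=.
Qed.

Lemma branch_connected v : connected_in (@lex_prod _ f k) (branch v).
Proof.
move=> p q pv qv; pose lift x := (x, insubd p.2 (slot x v)).
have lift_fst u : u \in branch v -> lift u.1 = u.
  by move=> uv; apply: branch_fst_inj (mem_branch _ (branch_fst uv)) uv _.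
rewrite -(lift_fst p pv) -(lift_fst q qv); apply: connect_homo; last first.
  by apply: (B_subtree v).2; rewrite inE branch_fst.
move=> a b /and3P[fab /[!inE] av bv]; apply: connect1.
by rewrite /restrict_rel /lex_prod /= !mem_branch // fab orbT.
Qed.

Lemma branch_disjoint u v : u != v -> [disjoint branch u & branch v].
Proof.
move=> uv; rewrite -setI_eq0; apply/eqP/setP => p; rewrite !inE.
apply/negP => /andP[/andP[ux /eqP pu] /andP[vx /eqP pv]].
by move/eqP: uv; apply; apply: (slot_inj ux vx); rewrite -pu -pv.
Qed.

Lemma branch_edge u v : e u v ->
  exists p q, [&& p \in branch u, q \in branch v & @lex_prod _ f k p q].
Proof.
move=> euv; case: (B_edge euv) => x /andP[ux vx].
pose i0 := Ordinal (slot_lt ux).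
exists (x, insubd i0 (slot x u)), (x, insubd i0 (slot x v)).
rewrite !mem_branch //= /lex_prod /= eqxx /=; apply/orP; left.
apply: contraTneq euv => /(congr1 val); rewrite !val_insubd !slot_lt // => /(slot_inj ux vx)->.
by rewrite e_irr.
Qed.

End DecompositionLexMinor.

Lemma td_bagsize_has_ltp (V : finType) (e : rel V) k :
  irreflexive e -> has_td_bagsize e k -> has_ltp e k.
Proof.
move=> e_irr [X [f [B [[f_tree B_subtree B_edge] B_card]]]].
exists X, f; split=> //; exists (branch B k); split.
- exact: branch_neq0 B_subtree B_card.
- exact: branch_connected B_subtree B_card.
- exact: branch_disjoint.
- exact: branch_edge e_irr B_edge B_card.
Qed.

Lemma unit_is_tree : is_tree [rel _ _ : unit | false].
Proof.
split=> //; first by apply/card_gt0P; exists tt.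
  by move=> [] [] _ _; exact: connect0.
move=> s /card_uniqP s_uniq s_size; have := max_card (mem s).
by rewrite s_uniq card_unit => /(leq_trans s_size).
Qed.

Lemma has_td_bagsize_card (V : finType) (e : rel V) : has_td_bagsize e #|V|.
Proof.
exists unit, [rel _ _ : unit | false], (fun _ => [set: V]).
split=> [|_]; last by rewrite cardsT.
split; first exact: unit_is_tree.
  move=> v; split; first by apply/set0Pn; exists tt; rewrite !inE.
  by move=> [] [] _ _; exact: connect0.
by move=> u v _; exists tt; rewrite !in_setT.
Qed.

Lemma ex_minimal_nat (P : nat -> Prop) n :
  P n -> exists m, P m /\ forall k, P k -> m <= k.
Proof.
elim/ltn_ind: n => n IHn Pn.
have [[m [mn Pm]] | no_smaller] := classic (exists m, m < n /\ P m); first exact: IHn mn Pm.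
by exists n; split=> // m Pm; rewrite leqNgt; apply/negP => mn; apply: no_smaller; exists m.
Qed.

Theorem lemma12 (V : finType) (e : rel V) (Ge : simple_graph e) :
  exists (l : nat) (t : int),
    [/\ ltp_is e l, treewidth_is e t,
        (l%:Z - 1 <= t)%R & (t <= 2 * l%:Z - 1)%R].
Proof.
have e_irr : irreflexive e := Ge.2.
have [k [td_k k_min]] := ex_minimal_nat (has_td_bagsize_card e).
have ltp_k := td_bagsize_has_ltp e_irr td_k.
have [l [ltp_l l_min]] := ex_minimal_nat ltp_k.
exists l, (k%:Z - 1)%R; split; [by [] | by exists k | |].
- by have := l_min _ ltp_k; lia.
- by have := k_min _ (has_ltp_td_bagsize ltp_l); lia.
Qed.
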